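(* Let $\mathbf i$ be a reduced expression of $w_0$ whose standard seed satisfies properties (A), (B) and (C). Then for every $j\in J_{ex}(\mathbf i)$, $$\beta_jP_{\mathrm{in}(j)}=\beta_{j_+(\mathbf i)}P_{\mathrm{out}(j)}.$$
   Context: $\mathfrak g$ is a complex simple Lie algebra of simply-laced type, vertex set $I=\{1,\dots,n\}$, Cartan entries $i\cdot j$, Weyl group with simple reflections $s_i$, longest element $w_0$, $N=\ell(w_0)$, fundamental weights $\omega_i$. $\overline D:\mathbb C[\mathsf N]\to\mathbb C(\alpha_1,\dots,\alpha_n)$ is the algebra morphism $\overline D(f)=\sum_{\mathbf j}(f,e_{j_1}\cdots e_{j_r})\big(\alpha_{j_1}(\alpha_{j_1}+\alpha_{j_2})\cdots(\alpha_{j_1}+\dots+\alpha_{j_r})\big)^{-1}$ ($\mathbb C[\mathsf N]$ identified with the graded dual of $U(\mathfrak n)$, $e_i$ Chevalley generators, $\alpha_i$ indeterminates). Positive roots are linear forms in the $\alpha_i$; $(\beta;P)$ = multiplicity of $\beta$ in $P$. For a reduced expression $\mathbf i$: $\beta_j=s_{i_1}\cdots s_{i_{j-1}}(\alpha_{i_j})$; $j_-(\mathbf i)=\max(\{l<j:i_l=i_j\}\cup\{0\})$; $j_+(\mathbf i)=\min(\{l>j:i_l=i_j\}\cup\{N+1\})$; $J_{ex}(\mathbf i)=\{j:j_+(\mathbf i)\le N\}$; $x_j=D(s_{i_1}\cdots s_{i_j}\omega_{i_j},\omega_{i_j})$ are the flag minors (cluster variables of the standard seed). The quiver $Q^{\mathbf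 i}$ on $\{1,\dots,N\}$ has an (ordinary) arrow $u\to v$ iff $i_u\cdot i_v=-1$ and $u<v<u_+<v_+$, and a (horizontal) arrow $u_+\to u$ for each $u\in J_{ex}$. For $j\in J_{ex}$ let $\mathrm{inord}(j)$ (resp. $\mathrm{outord}(j)$) be the set of sources (resp. targets) of ordinary arrows into (resp. out of) $j$; set $P_{\mathrm{in}(j)}:=P_{j_+}\prod_{l\in\mathrm{inord}(j)}P_l$ and $P_{\mathrm{out}(j)}:=P_{j_-}\prod_{l\in\mathrm{outord}(j)}P_l$ with $P_0:=1$. Properties: (A) $\overline D(x_j)=1/P_j$ with $P_j$ a product of positive roots, for all $j$; (B) $P_jP_{j_-}=\beta_j\prod_{l<j<l_+,\,i_l\cdot i_j=-1}P_l$ for all $j$, with $P_0=1$; (C) $(\beta_i;P_j)-(\beta_i;P_{j_+})\le1$ for all $j\in J_{ex}$, $1\le i\le N$. *)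

From HB Require Import structures.
From mathcomp Require Import all_boot all_order all_algebra all_field.
From mathcomp Require Import mpoly.
Set Implicit Arguments. Unset Strict Implicit. Unset Printing Implicit Defensive.
Import Order.TTheory GRing.Theory Num.Theory.
Local Open Scope ring_scope.

Section Defs.
Variable n : nat.

(* vectors of the root lattice: coordinates on the simple roots alpha_k *)
Definition rvec := {ffun 'I_n -> int}.

Definition cartan_ok (C : 'M[int]_n) : Prop :=
  (0 < n)%N /\
  [/\ (forall i, C i i = 2),
      (forall i j, C i j = C j i),
      (forall i j, i != j -> C i j = 0 \/ C i j = -1),
      (* connected Dynkin diagram (g simple) *)
      (forall S : {set 'I_n}, S != set0 -> S != setT ->
          exists a b, [/\ a \in S, b \notin S & C a b != 0]) &
      (* finite type: positive definite *)
      (forall x : rvec, x != 0 ->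
          0 < \sum_(a < n) \sum_(b < n) x a * C a b * x b)].

(* simple reflection s_i on the root lattice: s_i(v) = v - <v, alpha_i^vee> alpha_i *)
Definition sref (C : 'M[int]_n) (i : 'I_n) (v : rvec) : rvec :=
  [ffun k => v k - (if k == i then \sum_(m < n) v m * C m i else 0)].

Fixpoint wact (C : 'M[int]_n) (u : seq 'I_n) (v : rvec) : rvec :=
  if u is a :: u' then sref C a (wact C u' v) else v.

Definition srt (k : 'I_n) : rvec := [ffun m => (m == k)%:R].

Definition weq (C : 'M[int]_n) (u u' : seq 'I_n) : Prop :=
  forall v, wact C u v = wact C u' v.

Definition reduced (C : 'M[int]_n) (w : seq 'I_n) : Prop :=
  forall u, (size u < size w)%N -> ~ weq C u w.

(* w is a reduced expression of the longest element w0: w is reduced and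
   every Weyl group element has length <= size w *)
Definition reduced_w0 (C : 'M[int]_n) (w : seq 'I_n) : Prop :=
  reduced C w /\ forall u, exists u', (size u' <= size w)%N /\ weq C u' u.

Definition pos_root (C : 'M[int]_n) (b : rvec) : Prop :=
  (exists u k, b = wact C u (srt k)) /\ b != 0 /\ forall k, 0 <= b k.

(* ---------- combinatorics of the word (positions 1..N) ---------- *)
Definition Nw (w : seq 'I_n) := size w.
Definition letter (w : seq 'I_n) (l : nat) : option 'I_n := onth w l.-1.
Definition cdot (C : 'M[int]_n) (w : seq 'I_n) (a b : nat) : int :=
  match letter w a, letter w b with Some x, Some y => C x y | _, _ => 0 end.

Definition beta (C : 'M[int]_n) (w : seq 'I_n) (j : nat) : rvec :=
  match letter w j with Some k => wact C (take j.-1 w) (srt k) | None => 0 end.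

Definition jplus (w : seq 'I_n) (j : nat) : nat :=
  head (Nw w).+1 [seq l <- iota j.+1 (Nw w - j) | letter w l == letter w j].
Definition jminus (w : seq 'I_n) (j : nat) : nat :=
  last 0%N [seq l <- iota 1 j.-1 | letter w l == letter w j].

Definition Jex (w : seq 'I_n) (j : nat) : bool :=
  [&& (1 <= j)%N, (j <= Nw w)%N & (jplus w j <= Nw w)%N].

Definition ord_arrow (C : 'M[int]_n) (w : seq 'I_n) (u v : nat) : bool :=
  [&& (1 <= u <= Nw w)%N, (1 <= v <= Nw w)%N, cdot C w u v == -1,
      (u < v)%N, (v < jplus w u)%N & (jplus w u < jplus w v)%N].

Definition Poly := {mpoly algC[n]}.

(* a root as a linear form in the indeterminates alpha_1..alpha_n *)
Definition lin (b : rvec) : Poly := \sum_(k < n) ((b k)%:~R : algC) *: 'X_k.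

Definition Pz (P : nat -> Poly) (j : nat) : Poly := if j == 0%N then 1 else P j.

Definition pdvd (p q : Poly) : Prop := exists r, q = p * r.
Definition is_mult (b p : Poly) (m : nat) : Prop :=
  pdvd (b ^+ m) p /\ ~ pdvd (b ^+ m.+1) p.

Definition propA (C : 'M[int]_n) (w : seq 'I_n) (P : nat -> Poly) : Prop :=
  forall j, (1 <= j <= Nw w)%N ->
    exists s : seq rvec, (forall b, b \in s -> pos_root C b) /\
                         P j = \prod_(b <- s) lin b.

Definition propB (C : 'M[int]_n) (w : seq 'I_n) (P : nat -> Poly) : Prop :=
  forall j, (1 <= j <= Nw w)%N ->
    P j * Pz P (jminus w j) =
    lin (beta C w j) *
      \prod_(1 <= l < (Nw w).+1 | [&& (l < j)%N, (j < jplus w l)%N & cdot C w l j == -1]) P l.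

Definition propC (C : 'M[int]_n) (w : seq 'I_n) (P : nat -> Poly) : Prop :=
  forall j i, Jex w j -> (1 <= i <= Nw w)%N ->
    forall a b, is_mult (lin (beta C w i)) (P j) a ->
                is_mult (lin (beta C w i)) (P (jplus w j)) b ->
                (a - b <= 1)%N.

Definition Pin (C : 'M[int]_n) (w : seq 'I_n) (P : nat -> Poly) (j : nat) : Poly :=
  P (jplus w j) * \prod_(1 <= l < (Nw w).+1 | ord_arrow C w l j) P l.
Definition Pout (C : 'M[int]_n) (w : seq 'I_n) (P : nat -> Poly) (j : nat) : Poly :=
  Pz P (jminus w j) * \prod_(1 <= l < (Nw w).+1 | ord_arrow C w j l) P l.

End Defs.

(* Apply (B) at j_+ and at j.  Since j_- (j_+) = j, multiplying the claimed identity by P_j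
   turns its two sides into beta_j beta_{j_+} times two products of P_l over the neighbours l
   of j; these products agree factor by factor, because the incidences of l with j, j_+ and l_+
   that the two sides record are the same. *)
From mathcomp Require Import all_boot all_order all_algebra all_field.
From mathcomp Require Import mpoly zify ring.
Set Implicit Arguments. Unset Strict Implicit. Unset Printing Implicit Defensive.
Local Open Scope ring_scope.
Import GRing.Theory.

Lemma head_filter_iotaP (p : pred nat) k a d :
  let x := head d [seq l <- iota a k | p l] in
  (x = d /\ forall l, (a <= l < a + k)%N -> ~~ p l) \/
  [/\ (a <= x < a + k)%N, p x & forall l, (a <= l < x)%N -> ~~ p l].
Proof.
elim: k a => [|k IH] a /=; first by left; split=> // l; lia.
case pa: (p a) => /=; first by right; split=> [||l]; lia.
have [[-> none]|[x_in px below]] := IH a.+1.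
  left; split=> // l Hl; case: (eqVneq l a) => [->|la]; first by rewrite pa.
  by apply: none; lia.
right; split=> //; first lia.
move=> l Hl; case: (eqVneq l a) => [->|la]; first by rewrite pa.
by apply: below; lia.
Qed.

Section NextOccurrence.
Variables (n : nat) (w : seq 'I_n).

Lemma jplusP j : (j <= Nw w)%N ->
  (jplus w j = (Nw w).+1 /\ forall l, (j < l <= Nw w)%N -> letter w l != letter w j) \/
  [/\ (j < jplus w j <= Nw w)%N, letter w (jplus w j) = letter w j &
      forall l, (j < l < jplus w j)%N -> letter w l != letter w j].
Proof.
move=> jN; rewrite /jplus.
have [[-> none]|[x_in /eqP same below]] :=
  head_filter_iotaP (fun l => letter w l == letter w j) (Nw w - j) j.+1 (Nw w).+1.
  by left; split=> // l Hl; apply: none; lia.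
by right; split=> [||l Hl]; [lia | | apply: below; lia].
Qed.

Lemma ltn_jplus j : (j <= Nw w)%N -> (j < jplus w j)%N.
Proof. by move=> jN; case/jplusP: (jN) => [[-> _]|[]]; lia. Qed.

Lemma letter_jplus j : (j <= Nw w)%N -> (jplus w j <= Nw w)%N ->
  letter w (jplus w j) = letter w j.
Proof. by move/jplusP => [[-> _]|[]]; first lia. Qed.

Lemma jminusK j : (1 <= j <= Nw w)%N -> (jplus w j <= Nw w)%N ->
  jminus w (jplus w j) = j.
Proof.
move=> jN jpN; have jN' : (j <= Nw w)%N by lia.
have [[E _]|[jjp Ljp between]] := jplusP jN'; first lia.
rewrite /jminus; set m := jplus w j in jjp Ljp between *.
have -> : m.-1 = (j.-1 + 1 + (m.-1 - j))%N by lia.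
rewrite !iotaD !filter_cat.
have -> : [seq l <- iota (1 + (j.-1 + 1)) (m.-1 - j) | letter w l == letter w m] = [::].
  rewrite -(filter_pred0 (iota (1 + (j.-1 + 1)) (m.-1 - j))).
  apply: eq_in_filter => l; rewrite mem_iota => Hl /=.
  by apply/negbTE; rewrite Ljp; apply: between; lia.
have -> : iota (1 + j.-1) 1 = [:: j] by rewrite /=; congr (_ :: _); lia.
by rewrite /= Ljp eqxx cats0 last_cat.
Qed.

End NextOccurrence.

Lemma lin_eq0 n (b : rvec n) : (lin b == 0) = (b == 0).
Proof.
apply/eqP/eqP => [lb0|->]; last by rewrite /lin big1 // => k _; rewrite ffunE scale0r.
apply/ffunP => k; have /eqP := congr1 (mcoeff U_(k)) lb0.
rewrite /lin mcoeff0 raddf_sum (bigD1 k) //= mcoeffZ mcoeffXU eqxx mulr1.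
rewrite big1 ?addr0 => [|i /negbTE ik]; last by rewrite mcoeffZ mcoeffXU ik mulr0.
by rewrite intr_eq0 ffunE => /eqP.
Qed.

Lemma propA_neq0 n (C : 'M[int]_n) w P j :
  propA C w P -> (1 <= j <= Nw w)%N -> P j != 0.
Proof.
move=> HA /HA [s [Hs ->]]; rewrite prodf_seq_neq0; apply/allP => b /Hs [_ [b0 _]].
by rewrite lin_eq0.
Qed.

Section Incidences.
Variables (n : nat) (C : 'M[int]_n) (w : seq 'I_n).
Hypotheses (C_diag : forall i, C i i = 2) (C_sym : forall i j, C i j = C j i).

Lemma cdotC a b : cdot C w a b = cdot C w b a.
Proof. by rewrite /cdot; case: (letter w a); case: (letter w b). Qed.

Lemma cdot_letterr a b b' : letter w b = letter w b' -> cdot C w a b = cdot C w a b'.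
Proof. by rewrite /cdot => ->. Qed.

Lemma cdot_neighbour a b : cdot C w a b = -1 -> letter w a != letter w b.
Proof.
rewrite /cdot; case: (letter w a) => [x|//]; case: (letter w b) => [y|//].
by move=> xy; apply/eqP => -[xy_eq]; move: xy; rewrite xy_eq C_diag.
Qed.

Definition straddling_neighbour (k l : nat) : bool :=
  [&& (l < k)%N, (k < jplus w l)%N & cdot C w l k == -1].

Variable j : nat.
Hypotheses (jN : (1 <= j <= Nw w)%N) (jpN : (jplus w j <= Nw w)%N).

(* A neighbour l of j has i_l <> i_j, so l is neither j nor j_+ and l_+ <> j_+; the identity
   is then a comparison of the positions of l and l_+ relative to j < j_+. *)
Lemma straddling_arrow_count l : (1 <= l <= Nw w)%N ->
  (straddling_neighbour (jplus w j) l + ord_arrow C w l j =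
   straddling_neighbour j l + ord_arrow C w j l)%N.
Proof.
move=> lN; have jN' : (j <= Nw w)%N by lia.
have jjp := ltn_jplus jN'; have Ljp := letter_jplus jN' jpN.
rewrite /straddling_neighbour /ord_arrow (cdot_letterr l Ljp) (cdotC j l).
case: (eqVneq (cdot C w l j) (-1)) => [lj|_]; last by rewrite !andbF.
have nb := cdot_neighbour lj.
have lj_ne : l != j by apply: contraNneq nb => ->.
have ljp_ne : l != jplus w j by apply: contraNneq nb => ->; rewrite Ljp.
have lN' : (l <= Nw w)%N by lia.
have llp := ltn_jplus lN'.
have lpjp_ne : jplus w l != jplus w j.
  apply: contraNneq nb => lpjp.
  have lpN : (jplus w l <= Nw w)%N by rewrite lpjp.
  by rewrite -(letter_jplus lN' lpN) lpjp Ljp.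
lia.
Qed.

Lemma prod_straddling_exchange (R : comPzSemiRingType) (P : nat -> R) :
  (\prod_(1 <= l < (Nw w).+1 | straddling_neighbour (jplus w j) l) P l) *
    (\prod_(1 <= l < (Nw w).+1 | ord_arrow C w l j) P l) =
  (\prod_(1 <= l < (Nw w).+1 | straddling_neighbour j l) P l) *
    (\prod_(1 <= l < (Nw w).+1 | ord_arrow C w j l) P l).
Proof.
rewrite [X in X * _ = _]big_mkcond [X in _ * X = _]big_mkcond.
rewrite [X in _ = X * _]big_mkcond [X in _ = _ * X]big_mkcond -!big_split /=.
apply: eq_big_nat => l lN.
have pow_if (b : bool) : (if b then P l else 1) = P l ^+ b by case: b.
by rewrite !pow_if -!exprD straddling_arrow_count //; lia.
Qed.

End Incidences.

Theorem lemma6p3 (n : nat) (C : 'M[int]_n) (w : seq 'I_n) (P : nat -> {mpoly algC[n]}) :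
  cartan_ok C ->
  reduced_w0 C w ->
  propA C w P -> propB C w P -> propC C w P ->
  forall j, Jex w j ->
    lin (beta C w j) * Pin C w P j = lin (beta C w (jplus w j)) * Pout C w P j.
Proof.
move=> [_ [C_diag C_sym _ _ _]] _ HA HB _ j /and3P [j1 jN jpN].
have jN1 : (1 <= j <= Nw w)%N by rewrite j1.
have B_j := HB j jN1.
have jpN1 : (1 <= jplus w j <= Nw w)%N by have := ltn_jplus jN; lia.
have B_jplus := HB (jplus w j) jpN1.
rewrite jminusK // /Pz (_ : (j == 0%N) = false) in B_jplus; last lia.
have exchange := prod_straddling_exchange C_diag C_sym jN1 jpN P.
apply: (mulfI (propA_neq0 HA jN1)); rewrite /Pin /Pout.
transitivity (lin (beta C w j) * (P (jplus w j) * P j) *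
              \prod_(1 <= l < (Nw w).+1 | ord_arrow C w l j) P l); first by ring.
rewrite B_jplus.
transitivity (lin (beta C w (jplus w j)) * (P j * Pz P (jminus w j)) *
              \prod_(1 <= l < (Nw w).+1 | ord_arrow C w j l) P l); last by ring.
by rewrite B_j -!mulrA exchange; ring.
Qed.
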